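(* Let $M=(E,\mathcal{I})$ be a matroid of rank $r$, $u:E\to\mathbb{Z}_{\ge0}$ integer capacities and $k\in\mathbb{N}$. Suppose bases $B_1,\dots,B_k$ (with insertion levels) and levels $\ell:E\to\mathbb{Z}_{\ge0}$ satisfy invariants (I1)–(I3) with height $h>r+2$. Then there exists a level $j$ such that $$\sum_{e\in E}\min\{u(e),x(e)\}\ \ge\ u(E_{<j})+k\,\mathrm{rank}(E_{\ge j}).$$ Consequently $B_1,\dots,B_k$ is an optimal solution of the $k$-fold matroid union problem and $E_{\ge j}$ is an optimal dual solution.
   Context: For $e\in E$, $x(e)=|\{i: e\in B_i\}|$; $e$ is uncovered if $x(e)<u(e)$. $u(T)=\sum_{e\in T}u(e)$. The $k$-fold matroid union problem maximizes $\sum_e\min\{u(e),x(e)\}$ over $k$ bases; the dual minimizes $k\,\mathrm{rank}(S)+u(E\setminus S)$ over $S\subseteq E$, and the optimal values coincide. Each element $e\in B_i$ carries an insertion level (the value of $\ell(e)$ when $e$ was inserted into $B_i$; levels never decrease, so insertion levels are at most current levels). $E_j=\{e:\ell(e)=j\}$ and analogously $E_{<j},E_{\ge j},E_{>j}$; $B_{i,\ge j}$ denotes the elements of $B_i$ with insertion level at least $j$. Invariants: (I1) $\ell(e)=0$ whenever $e$ lies in strictly more than $u(e)$ bases; (I2) for all $i$ and $j$, $B_{i,\ge j}$ spans $E_{>j}$; (I3) every uncovered $e$ has $\ell(e)\ge h$. *)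

From mathcomp Require Import all_boot.
Set Implicit Arguments. Unset Strict Implicit. Unset Printing Implicit Defensive.

Definition is_matroid (E : finType) (indep : {set E} -> bool) : Prop :=
  [/\ indep set0,
      (forall A B : {set E}, A \subset B -> indep B -> indep A) &
      (forall A B : {set E}, indep A -> indep B -> #|A| < #|B| ->
         exists2 e, e \in B :\: A & indep (e |: A))].

Definition mrank (E : finType) (indep : {set E} -> bool) (S : {set E}) : nat :=
  \max_(A in powerset S | indep A) #|A|.

Definition is_base (E : finType) (indep : {set E} -> bool) (B : {set E}) : bool :=
  indep B && [forall e, (e \notin B) ==> ~~ indep (e |: B)].

Definition mclosure (E : finType) (indep : {set E} -> bool) (A : {set E}) : {set E} :=
  [set e | mrank indep (e |: A) == mrank indep A].

Definition spans (E : finType) (indep : {set E} -> bool) (A T : {set E}) : bool :=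
  T \subset mclosure indep A.

Definition mult (E : finType) (k : nat) (B : 'I_k -> {set E}) (e : E) : nat :=
  #|[set i | e \in B i]|.

Definition union_value (E : finType) (k : nat) (u : E -> nat)
  (B : 'I_k -> {set E}) : nat :=
  \sum_(e : E) minn (u e) (mult B e).

Definition usum (E : finType) (u : E -> nat) (T : {set E}) : nat :=
  \sum_(e in T) u e.

Definition lev_lt (E : finType) (l : E -> nat) (j : nat) : {set E} := [set e | l e < j].
Definition lev_ge (E : finType) (l : E -> nat) (j : nat) : {set E} := [set e | j <= l e].
Definition lev_gt (E : finType) (l : E -> nat) (j : nat) : {set E} := [set e | j < l e].

Definition Bge (E : finType) (k : nat) (B : 'I_k -> {set E})
  (ins : 'I_k -> E -> nat) (i : 'I_k) (j : nat) : {set E} :=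
  [set e in B i | j <= ins i e].

From mathcomp Require Import all_boot.
Set Implicit Arguments. Unset Strict Implicit. Unset Printing Implicit Defensive.

(* Weak duality bounds [union_value u B] by [k * rank S + u(E \ S)] for every
   S, so it suffices to find a level j at which S = E_{>=j} attains the value.
   The ranks of E_{>=1}, E_{>=2}, ... are nonincreasing and bounded by r, so
   they cannot drop at every level 1, ..., r+1: there is j <= r+1 < h with
   rank E_{>=j} = rank E_{>j}.  Since j < h, (I3) says nothing below level j is
   uncovered, and since j > 0, (I1) says nothing at level >= j is overcovered;
   hence the value is u(E_{<j}) + sum_i |B_i ∩ E_{>=j}|.  Finally B_i ∩ E_{>=j}
   contains the independent set B_{i,>=j}, which spans E_{>j} by (I2) and thus
   has at least rank E_{>j} = rank E_{>=j} elements. *)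

Lemma exists_nondecreasing_step (f : nat -> nat) (r : nat) :
  f 1 <= r -> exists2 j, 0 < j <= r.+1 & f j <= f j.+1.
Proof.
elim: r f => [|r IHr] f f1_le.
  by exists 1 => //; move: f1_le; rewrite leqn0 => /eqP->.
have [f12 | f21] := leqP (f 1) (f 2); first by exists 1.
have [j /andP[j_gt0 j_le] fj] : exists2 j, 0 < j <= r.+1 & f j.+1 <= f j.+2.
  by apply: (IHr (fun n => f n.+1)); rewrite -ltnS (leq_trans f21).
by exists j.+1.
Qed.

Section MatroidRank.
Variables (E : finType) (indep : {set E} -> bool).

Lemma mrank_leq_card (S : {set E}) : mrank indep S <= #|S|.
Proof.
apply/bigmax_leqP => A; rewrite powersetE => /andP[sAS _].
exact: subset_leq_card.
Qed.

Lemma indep_leq_mrank (A S : {set E}) :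
  A \subset S -> indep A -> #|A| <= mrank indep S.
Proof.
move=> sAS iA; apply: (leq_bigmax_cond (P := fun A => (A \in powerset S) && indep A)).
by rewrite powersetE sAS.
Qed.

Lemma mrank_indep (A : {set E}) : indep A -> mrank indep A = #|A|.
Proof.
by move=> iA; apply/eqP; rewrite eqn_leq mrank_leq_card indep_leq_mrank.
Qed.

Lemma mrankS (S T : {set E}) : S \subset T -> mrank indep S <= mrank indep T.
Proof.
move=> sST; apply/bigmax_leqP => A; rewrite powersetE => /andP[sAS iA].
exact: indep_leq_mrank (subset_trans sAS sST) iA.
Qed.

Hypothesis indep_matroid : is_matroid indep.

(* If the augmentation axiom added an element e of T to A, e would raise the
   rank of A, contradicting that A spans e. *)
Lemma mrank_leq_spanning_card (A T : {set E}) :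
  indep A -> spans indep A T -> mrank indep T <= #|A|.
Proof.
have [_ _ augment] := indep_matroid.
move=> iA /subsetP spanT; apply/bigmax_leqP => I; rewrite powersetE.
case/andP=> sIT iI; rewrite leqNgt; apply/negP => ltAI.
have [e /setDP[eI eA] ieA] := augment A I iA iI ltAI.
have := spanT e (subsetP sIT e eI); rewrite inE (mrank_indep iA) (mrank_indep ieA).
by rewrite cardsU1 eA add1n eqn_leq ltnn.
Qed.

Lemma sum_mult (k : nat) (B : 'I_k -> {set E}) (S : {set E}) :
  \sum_(e in S) mult B e = \sum_(i < k) #|B i :&: S|.
Proof.
transitivity (\sum_(e in S) \sum_(i < k) (e \in B i)).
  apply: eq_bigr => e _; rewrite /mult -sum1_card big_mkcond.
  by apply: eq_bigr => i _; rewrite inE.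
rewrite exchange_big; apply: eq_bigr => i _.
rewrite -sum1_card [RHS]big_mkcond [LHS]big_mkcond; apply: eq_bigr => e _.
by rewrite !inE andbC; case: (e \in S).
Qed.

Lemma union_value_leq_dual (k : nat) (u : E -> nat) (B : 'I_k -> {set E})
    (S : {set E}) :
  (forall i, indep (B i)) -> union_value u B <= k * mrank indep S + usum u (~: S).
Proof.
have [_ indep_sub _] := indep_matroid.
move=> iB; rewrite /union_value (bigID (mem S)) /=.
apply: leq_add.
  apply: (@leq_trans (\sum_(e in S) mult B e)).
    by apply: leq_sum => e _; exact: geq_minr.
  rewrite sum_mult -[k in k * _]card_ord -sum_nat_const.
  apply: leq_sum => i _; apply: indep_leq_mrank; first exact: subsetIr.
  exact: indep_sub (subsetIl _ _) (iB i).
rewrite /usum; under [X in _ <= X]eq_bigl => e do rewrite inE.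
by apply: leq_sum => e _; exact: geq_minl.
Qed.

End MatroidRank.

Section Levels.
Variables (E : finType) (l : E -> nat).

Lemma setC_lev_ge (j : nat) : ~: lev_ge l j = lev_lt l j.
Proof. by apply/setP => e; rewrite !inE ltnNge. Qed.

Lemma lev_geS (j : nat) : lev_ge l j.+1 = lev_gt l j.
Proof. by apply/setP => e; rewrite !inE. Qed.

Lemma Bge_sub_lev_ge (k : nat) (B : 'I_k -> {set E}) (ins : 'I_k -> E -> nat) i j :
  (forall e, e \in B i -> ins i e <= l e) -> Bge B ins i j \subset B i :&: lev_ge l j.
Proof.
move=> ins_le; apply/subsetP => e; rewrite !inE => /andP[eB je].
by rewrite eB (leq_trans je (ins_le e eB)).
Qed.

Lemma union_value_levels (k : nat) (u : E -> nat) (B : 'I_k -> {set E}) h j :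
  (forall e, u e < mult B e -> l e = 0) ->
  (forall e, mult B e < u e -> h <= l e) -> 0 < j <= h ->
  union_value u B = usum u (lev_lt l j) + \sum_(i < k) #|B i :&: lev_ge l j|.
Proof.
move=> overcovered_l0 uncovered_lh /andP[j_gt0 j_le_h].
rewrite /union_value (bigID (mem (lev_lt l j))) -sum_mult /usum /=; congr (_ + _).
  apply: eq_bigr => e; rewrite inE => ej; apply/minn_idPl.
  rewrite leqNgt; apply: contraTN ej => /uncovered_lh.
  by rewrite -leqNgt; apply: leq_trans.
apply: eq_big => [e | e]; rewrite -setC_lev_ge !inE ?negbK // => je.
apply/minn_idPr.
by rewrite leqNgt; apply: contraTN je => /overcovered_l0->; rewrite -ltnNge.
Qed.

Lemma mrank_lev_gt_leq_card (indep : {set E} -> bool) (k : nat)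
    (B : 'I_k -> {set E}) (ins : 'I_k -> E -> nat) i j :
  is_matroid indep -> indep (B i) -> (forall e, e \in B i -> ins i e <= l e) ->
  spans indep (Bge B ins i j) (lev_gt l j) ->
  mrank indep (lev_gt l j) <= #|B i :&: lev_ge l j|.
Proof.
move=> M iB ins_le span_gt; have [_ indep_sub _] := M.
have Bge_indep : indep (Bge B ins i j).
  apply: indep_sub iB; exact: subset_trans (Bge_sub_lev_ge _ ins_le) (subsetIl _ _).
apply: leq_trans (mrank_leq_spanning_card M Bge_indep span_gt) _.
exact/subset_leq_card/Bge_sub_lev_ge.
Qed.

End Levels.

Theorem mainTheorem2 (E : finType) (indep : {set E} -> bool)
  (u : E -> nat) (k : nat) (B : 'I_k -> {set E}) (ins : 'I_k -> E -> nat)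
  (l : E -> nat) (h : nat) :
  is_matroid indep ->
  (forall i, is_base indep (B i)) ->
  (* insertion levels are at most current levels *)
  (forall i e, e \in B i -> ins i e <= l e) ->
  (* (I1) *)
  (forall e, u e < mult B e -> l e = 0) ->
  (* (I2) *)
  (forall i j, spans indep (Bge B ins i j) (lev_gt l j)) ->
  (* (I3) *)
  (forall e, mult B e < u e -> h <= l e) ->
  mrank indep [set: E] + 2 < h ->
  exists j : nat,
    [/\ usum u (lev_lt l j) + k * mrank indep (lev_ge l j) <= union_value u B,
        (* B is optimal for the k-fold matroid union problem *)
        (forall B' : 'I_k -> {set E}, (forall i, is_base indep (B' i)) ->
           union_value u B' <= union_value u B) &
        (* E_{>= j} is an optimal dual solution *)
        (forall S : {set E},
           k * mrank indep (lev_ge l j) + usum u (~: lev_ge l j)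
           <= k * mrank indep S + usum u (~: S))].
Proof.
move=> M B_base ins_le I1 I2 I3 h_gt.
have B_indep i : indep (B i) by case/andP: (B_base i).
have [j /andP[j_gt0 j_le] rank_flat] :=
  exists_nondecreasing_step (f := fun j => mrank indep (lev_ge l j))
    (mrankS indep (subsetT (lev_ge l 1))).
have j_le_h : 0 < j <= h.
  by rewrite j_gt0 (leq_trans j_le) // ltnW // (leq_trans _ h_gt) // addn2.
have attained : usum u (lev_lt l j) + k * mrank indep (lev_ge l j) <= union_value u B.
  rewrite (union_value_levels I1 I3 j_le_h) leq_add2l.
  rewrite -[k in k * _]card_ord -sum_nat_const; apply: leq_sum => i _.
  rewrite (leq_trans rank_flat) //= lev_geS.
  exact: mrank_lev_gt_leq_card M (B_indep i) (ins_le i) (I2 i j).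
exists j; split => // [B' B'_base | S].
  apply: leq_trans (union_value_leq_dual M u (lev_ge l j) _) _.
    by move=> i; case/andP: (B'_base i).
  by rewrite setC_lev_ge addnC.
rewrite setC_lev_ge addnC.
exact: leq_trans attained (union_value_leq_dual M u S B_indep).
Qed.
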